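(* For every finite field $\mathbb{F}_q$ and every pair of integers $s,t\ge1$, the linear code $C=\bigoplus_{i=1}^{s}\mathrm{Rep}_t(\mathbb{F}_q)\le\mathbb{F}_q^{st}$ is an abelian group code.
   Context: $\mathrm{Rep}_t(\mathbb{F}_q)=\{(\lambda,\dots,\lambda):\lambda\in\mathbb{F}_q\}\le\mathbb{F}_q^t$ is the repetition code; the direct sum consists of vectors in $\mathbb{F}_q^{st}$ formed by concatenating $s$ blocks, each block a constant vector of length $t$. Let $\mathcal{B}=\{e_1,\dots,e_n\}$ be the standard basis of $\mathbb{F}_q^n$. For a finite group $H$ of order $n$, a linear code $C\le\mathbb{F}_q^n$ is an $H$-code if there exists a bijection $\phi:\mathcal{B}\to H$ whose $\mathbb{F}_q$-linear extension $\tilde\phi:\mathbb{F}_q^n\to\mathbb{F}_q[H]$ maps $C$ onto a two-sided ideal of the group algebra $\mathbb{F}_q[H]$. $C$ is an abelian group code if it is an $H$-code for some abelian group $H$. *)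

From HB Require Import structures.
From mathcomp Require Import all_boot all_order all_algebra all_fingroup.
Set Implicit Arguments. Unset Strict Implicit. Unset Printing Implicit Defensive.
Import GRing.Theory.
Local Open Scope ring_scope.

(* Group algebra F[H] for a finite group gT (H = the whole group gT):
   elements are functions gT -> F, i.e. sum_g a(g) g. *)
Definition galg (F : fieldType) (gT : finGroupType) := {ffun gT -> F}.

Definition galg_mul (F : fieldType) (gT : finGroupType) (a b : {ffun gT -> F})
  : {ffun gT -> F} :=
  [ffun g => \sum_(h : gT) a h * b ((h^-1) * g)%g].

Definition two_sided_ideal (F : finFieldType) (gT : finGroupType)
  (I : {set {ffun gT -> F}}) : Prop :=
  [/\ (0 : {ffun gT -> F}) \in I,
      (forall x y, x \in I -> y \in I -> x + y \in I),
      (forall x, x \in I -> - x \in I),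
      (forall a x, x \in I -> galg_mul a x \in I) &
      (forall a x, x \in I -> galg_mul x a \in I)].

(* Linear extension of phi : B -> H, with the standard basis e_k identified
   with k : 'I_n:  v = sum_k v_k e_k  |->  sum_k v_k phi(e_k). *)
Definition lin_ext (F : fieldType) (gT : finGroupType) (n : nat)
  (phi : 'I_n -> gT) (v : 'rV[F]_n) : {ffun gT -> F} :=
  [ffun g => \sum_(k < n | phi k == g) v 0 k].

Definition is_H_code (F : finFieldType) (gT : finGroupType) (n : nat)
  (C : {set 'rV[F]_n}) : Prop :=
  #|gT| = n /\
  exists phi : 'I_n -> gT, bijective phi /\
    two_sided_ideal (lin_ext phi @: C).

Definition abelian_group_code (F : finFieldType) (n : nat)
  (C : {set 'rV[F]_n}) : Prop :=
  exists gT : finGroupType, abelian [set: gT] /\ is_H_code gT C.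

(* The direct sum of s copies of Rep_t(F) in F^(s*t): coordinate k lies
   in block k %/ t, and each block is a constant vector. *)
Definition rep_sum_code (F : finFieldType) (s t : nat) : {set 'rV[F]_(s * t)} :=
  [set v : 'rV[F]_(s * t) | [exists lam : 'rV[F]_s,
     [forall k : 'I_(s * t), forall i : 'I_s,
        ((k %/ t)%N == i) ==> (v 0 k == lam 0 i)]]].

(** Index the coordinates of F^(st) by the abelian group Z_s x Z_t, sending
    coordinate k to (k / t, k mod t).  The direct sum of repetition codes then
    becomes the set of functions on Z_s x Z_t that depend only on the first
    coordinate.  For any group morphism f, the functions constant on the fibres
    of f form a two-sided ideal of the group algebra: (a * x)(g) and (x * a)(g)
    only evaluate x at points h^-1 g and g h^-1, whose images under f are
    determined by f g. *)

From mathcomp Require Import all_boot all_order all_algebra all_fingroup.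
Set Implicit Arguments. Unset Strict Implicit. Unset Printing Implicit Defensive.
Import GRing.Theory.
Local Open Scope ring_scope.

Definition fibre_const_set (F : finFieldType) (gT : finGroupType) (rT : eqType)
    (f : gT -> rT) : {set {ffun gT -> F}} :=
  [set x : {ffun gT -> F} |
    [forall g, forall g', (f g == f g') ==> (x g == x g')]].

Lemma fibre_constP (F : finFieldType) (gT : finGroupType) (rT : eqType)
    (f : gT -> rT) (x : {ffun gT -> F}) :
  reflect (forall g g', f g = f g' -> x g = x g') (x \in fibre_const_set F f).
Proof.
rewrite inE; apply: (iffP forallP) => [Hx g g' /eqP fgg'| Hx g].
  by have /forallP/(_ g')/implyP/(_ fgg')/eqP := Hx g.
by apply/forallP => g'; apply/implyP => /eqP/Hx ->.
Qed.

Lemma galg_mulEr (F : fieldType) (gT : finGroupType) (x a : {ffun gT -> F})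
    (g : gT) :
  galg_mul x a g = \sum_(h : gT) x (g * h^-1)%g * a h.
Proof.
rewrite /galg_mul ffunE (reindex_inj invg_inj) (reindex_inj (mulIg g^-1)%g).
by apply: eq_bigr => h _; rewrite invgK mulgKV invMg invgK.
Qed.

Lemma fibre_const_ideal (F : finFieldType) (gT rT : finGroupType)
    (f : gT -> rT) :
  {morph f : g h / (g * h)%g} -> two_sided_ideal (fibre_const_set F f).
Proof.
move=> fM; split.
- by apply/fibre_constP => g g' _; rewrite !ffunE.
- move=> x y /fibre_constP Hx /fibre_constP Hy; apply/fibre_constP => g g' e.
  by rewrite !ffunE (Hx g g') ?(Hy g g').
- move=> x /fibre_constP Hx; apply/fibre_constP => g g' e.
  by rewrite !ffunE (Hx g g').
- move=> a x /fibre_constP Hx; apply/fibre_constP => g g' e.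
  rewrite !ffunE; apply: eq_bigr => h _; congr (_ * _).
  by apply: Hx; rewrite !fM e.
- move=> a x /fibre_constP Hx; apply/fibre_constP => g g' e.
  rewrite !galg_mulEr; apply: eq_bigr => h _; congr (_ * _).
  by apply: Hx; rewrite !fM e.
Qed.

Lemma lin_extE (F : fieldType) (gT : finGroupType) (n : nat)
    (phi : 'I_n -> gT) (psi : gT -> 'I_n) (v : 'rV[F]_n) (g : gT) :
  cancel phi psi -> cancel psi phi -> lin_ext phi v g = v 0 (psi g).
Proof.
move=> phiK psiK; rewrite ffunE (big_pred1 (psi g)) // => k /=.
by apply/eqP/eqP => [<-|->].
Qed.

Lemma lin_ext_imset (F : finFieldType) (gT : finGroupType) (n : nat)
    (phi : 'I_n -> gT) (C : {set 'rV[F]_n}) :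
  bijective phi ->
  lin_ext phi @: C = [set y : {ffun gT -> F} | \row_k y (phi k) \in C].
Proof.
case=> psi phiK psiK; apply/setP => y; rewrite inE.
have rowK v : \row_k lin_ext phi v (phi k) = v.
  by apply/rowP => k; rewrite mxE (lin_extE _ _ phiK psiK) phiK.
apply/imsetP/idP => [[v Cv ->]|Cy]; first by rewrite rowK.
exists (\row_k y (phi k)) => //; apply/ffunP => g.
by rewrite (lin_extE _ _ phiK psiK) mxE psiK.
Qed.

Section BlockIndex.

Variables s t : nat.

Lemma ltn_div_ord (k : 'I_(s * t)) : (k %/ t < s)%N.
Proof.
by rewrite ltn_divLR ?ltn_ord //; case: t k => [|//] [k]; rewrite muln0.
Qed.

Lemma ltn_mod_ord (k : 'I_(s * t)) : (k %% t < t)%N.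
Proof. by rewrite ltn_mod; case: t k => [|//] [k]; rewrite muln0. Qed.

Definition block_of (k : 'I_(s * t)) : 'I_s * 'I_t :=
  (Ordinal (ltn_div_ord k), Ordinal (ltn_mod_ord k)).

Lemma block_of_bij : bijective block_of.
Proof.
apply: inj_card_bij; last by rewrite card_prod !card_ord.
move=> k k' [eq_div eq_mod]; apply: val_inj.
by rewrite /= (divn_eq k t) (divn_eq k' t) eq_div eq_mod.
Qed.

Lemma rep_sum_codeP (F : finFieldType) (v : 'rV[F]_(s * t)) :
  reflect (forall k k', (block_of k).1 = (block_of k').1 -> v 0 k = v 0 k')
          (v \in rep_sum_code F s t).
Proof.
rewrite inE; apply: (iffP existsP) => [[lam /forallP Hlam]|Hv].
  have vE k : v 0 k = lam 0 (block_of k).1.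
    by apply/eqP; have /forallP/(_ (block_of k).1)/implyP-> := Hlam k.
  by move=> k k' eq1; rewrite !vE eq1.
have [t0|t_gt0] := posnP t.
  by exists 0; apply/forallP => k; have := ltn_ord k; rewrite {2}t0 muln0.
have lt_first (i : 'I_s) : (i * t < s * t)%N by rewrite ltn_pmul2r.
exists (\row_i v 0 (Ordinal (lt_first i))).
apply/forallP => k; apply/forallP => i; apply/implyP => /eqP eq_div.
rewrite mxE; apply/eqP/Hv; apply: val_inj => /=.
by rewrite eq_div mulnK.
Qed.

End BlockIndex.

Lemma lin_ext_rep_sum_code (F : finFieldType) (s t : nat) :
  lin_ext (@block_of s.+1 t.+1) @: rep_sum_code F s.+1 t.+1
  = fibre_const_set F (@fst 'I_s.+1 'I_t.+1).
Proof.
have [psi _ psiK] := block_of_bij s.+1 t.+1.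
rewrite (lin_ext_imset _ (block_of_bij _ _)); apply/setP => y; rewrite inE.
apply/rep_sum_codeP/fibre_constP => [Hy g g' eq1|Hy k k' eq1].
  by have := Hy (psi g) (psi g'); rewrite !mxE !psiK; apply.
by rewrite !mxE; apply: Hy.
Qed.

Lemma rep_sum_code_abelian (F : finFieldType) (s t : nat) :
  abelian_group_code (rep_sum_code F s.+1 t.+1).
Proof.
exists ('I_s.+1 * 'I_t.+1)%type; split.
  by apply/centsP => -[x1 x2] _ [y1 y2] _; congr (_, _); apply: Zp_addC.
split; first by rewrite card_prod !card_ord.
exists (@block_of s.+1 t.+1); split; first exact: block_of_bij.
by rewrite lin_ext_rep_sum_code; apply: fibre_const_ideal.
Qed.

Theorem theorem3 (F : finFieldType) (s t : nat) (hs : (1 <= s)%N) (ht : (1 <= t)%N) :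
  abelian_group_code (rep_sum_code F s t).
Proof.
by case: s hs => // s _; case: t ht => // t _; apply: rep_sum_code_abelian.
Qed.
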